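(* Let $d:[0,1]^2\to\mathbb{R}$ be a convex function and let $\ell_1,\dots,\ell_t$ be an $\epsilon$-approximate family of $d$. Let $\mathcal{C}\subset[0,1]^2$ be a point set. For each $i$, let $(x_i^*,y_i^* )=\arg\max_{\mathbf{p}\in\mathcal{C}}\ell_i(\mathbf{p}_x,\mathbf{p}_y)$, and let $(x^*,y^* )$ be the point $(x_i^*,y_i^* )$ maximizing $\ell_i(x_i^*,y_i^* )$ over $i=1,\dots,t$. Let $d^*=\sup_{\mathbf{p}\in\mathcal{C}}d(\mathbf{p}_x,\mathbf{p}_y)$, $d_{\inf}=\inf_{\mathbf{q}\in[0,1]^2}d(\mathbf{q}_x,\mathbf{q}_y)$, and $m=\max(l^U(x^*,y^* ),d_{\inf})$. Then $$m\le d^*\le m+\epsilon.$$ If instead $\ell_1,\dots,\ell_t$ is a relative $\epsilon$-approximate family of $d$ (with the same definitions of $x_i^*,y_i^*,x^*,y^*,d^*,d_{\inf},m$), then $$m\le d^*\le(1+\epsilon)m.$$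
   Context: A linear function is $\ell(x,y)=a_1x+a_2y+a_3$. For linear functions $\ell_1,\dots,\ell_t$, their upper envelope is $l^U(x,y)=\max_{i\le t}\ell_i(x,y)$. The collection $\ell_1,\dots,\ell_t$ is an $\epsilon$-approximate family of $d$ if $l^U(x,y)\le d(x,y)\le l^U(x,y)+\epsilon$ for all $(x,y)\in[0,1]^2$; it is a relative $\epsilon$-approximate family of $d$ if $l^U(x,y)\le d(x,y)\le(1+\epsilon)l^U(x,y)$ for all $(x,y)\in[0,1]^2$. *)

From HB Require Import structures.
From mathcomp Require Import all_boot all_order all_algebra.
From mathcomp Require Import all_classical all_reals.
Set Implicit Arguments. Unset Strict Implicit. Unset Printing Implicit Defensive.
Import Order.TTheory GRing.Theory Num.Theory.
Local Open Scope ring_scope.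
Local Open Scope classical_set_scope.

Section Defs.
Variable R : realType.

Definition square : set (R * R) :=
  [set p | 0 <= p.1 <= 1 /\ 0 <= p.2 <= 1].

Definition lin (a : R * R * R) (x y : R) : R := a.1.1 * x + a.1.2 * y + a.2.

Definition upper_env (t : nat) (ell : 'I_t -> R * R * R) (x y : R) : R :=
  sup [set lin (ell i) x y | i in [set: 'I_t]].

Definition convex_on_square (d : R -> R -> R) : Prop :=
  forall p q : R * R, square p -> square q -> forall a : R, 0 <= a <= 1 ->
    d (a * p.1 + (1 - a) * q.1) (a * p.2 + (1 - a) * q.2)
    <= a * d p.1 p.2 + (1 - a) * d q.1 q.2.

Definition approx_family (t : nat) (ell : 'I_t -> R * R * R) (d : R -> R -> R) (eps : R) : Prop :=
  forall p : R * R, square p ->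
    upper_env ell p.1 p.2 <= d p.1 p.2 <= upper_env ell p.1 p.2 + eps.

Definition rel_approx_family (t : nat) (ell : 'I_t -> R * R * R) (d : R -> R -> R) (eps : R) : Prop :=
  forall p : R * R, square p ->
    upper_env ell p.1 p.2 <= d p.1 p.2 <= (1 + eps) * upper_env ell p.1 p.2.

End Defs.

From HB Require Import structures.
From mathcomp Require Import all_boot all_order all_algebra.
From mathcomp Require Import all_classical all_reals.
From mathcomp Require Import lra.

Import Order.TTheory GRing.Theory Num.Theory.
Local Open Scope ring_scope.
Local Open Scope classical_set_scope.

(** Every p in C satisfies l_i(p) <= l_i(p_i) <= l_istar(xs, ys) <= l^U(xs, ys),
    so on C the upper envelope peaks at (xs, ys).  The approximation property
    turns this into d(p) <= l^U(xs, ys) + eps (resp. (1 + eps) l^U(xs, ys)) on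
    C, which bounds dstar.  Conversely dstar >= d(xs, ys), which dominates both
    l^U(xs, ys) and dinf. *)

Section UpperEnvelope.
Local Set Implicit Arguments.
Local Unset Strict Implicit.
Variables (R : realType) (t : nat) (ell : 'I_t -> R * R * R).

Lemma lin_le_upper_env i x y : lin (ell i) x y <= upper_env ell x y.
Proof.
apply: ub_le_sup; last by exists i.
exists (\sum_j `|lin (ell j) x y|) => _ [j _ <-].
rewrite (bigD1 j) //=; apply: le_trans (ler_norm _) _.
by rewrite lerDl sumr_ge0.
Qed.

Lemma upper_env_le_ub (i0 : 'I_t) x y B :
  (forall i, lin (ell i) x y <= B) -> upper_env ell x y <= B.
Proof.
move=> lin_le_B; apply: ge_sup; first by exists (lin (ell i0) x y), i0.
by move=> _ [i _ <-].
Qed.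

End UpperEnvelope.

Lemma lin_ge_square {R : realType} (a : R * R * R) (q : R * R) :
  square q -> a.2 - `|a.1.1| - `|a.1.2| <= lin a q.1 q.2.
Proof.
case=> /andP[x_ge0 x_le1] /andP[y_ge0 y_le1]; rewrite /lin.
have := ler_norm a.1.1; have := ler_norm (- a.1.1).
have := ler_norm a.1.2; have := ler_norm (- a.1.2).
rewrite !normrN; nra.
Qed.

Section ArgmaxOverC.
Local Set Implicit Arguments.
Local Unset Strict Implicit.
Variables (R : realType) (t : nat) (ell : 'I_t -> R * R * R).
Variables (C : set (R * R)) (ps : 'I_t -> R * R) (istar : 'I_t).
Hypothesis C_square : C `<=` @square R.
Hypothesis ps_argmax : forall i, C (ps i) /\
  forall p, C p -> lin (ell i) p.1 p.2 <= lin (ell i) (ps i).1 (ps i).2.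
Hypothesis istar_max : forall i,
  lin (ell i) (ps i).1 (ps i).2 <= lin (ell istar) (ps istar).1 (ps istar).2.

Let xs := (ps istar).1.
Let ys := (ps istar).2.

Lemma upper_env_le_argmax p :
  C p -> upper_env ell p.1 p.2 <= upper_env ell xs ys.
Proof.
move=> Cp; apply: (upper_env_le_ub istar) => i.
apply: le_trans (proj2 (ps_argmax i) p Cp) _.
exact: le_trans (istar_max i) (lin_le_upper_env _ _ _ _).
Qed.

Lemma argmax_in_C : C (xs, ys).
Proof. by rewrite /xs /ys -surjective_pairing; case: (ps_argmax istar). Qed.

Lemma inf_square_le (d : R -> R -> R) q :
  (forall q, square q -> upper_env ell q.1 q.2 <= d q.1 q.2) ->
  square q -> inf [set d q.1 q.2 | q in @square R] <= d q.1 q.2.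
Proof.
move=> env_le_d sq_q; apply: ge_inf; last by exists q.
exists ((ell istar).2 - `|(ell istar).1.1| - `|(ell istar).1.2|).
move=> _ [r sq_r <-]; apply: le_trans (env_le_d r sq_r).
exact: le_trans (lin_ge_square _ _ sq_r) (lin_le_upper_env _ _ _ _).
Qed.

Lemma sup_image_C_bounds (d : R -> R -> R) (B : R) :
  (forall q, square q -> upper_env ell q.1 q.2 <= d q.1 q.2) ->
  (forall p, C p -> d p.1 p.2 <= B) ->
  let dstar := sup [set d p.1 p.2 | p in C] in
  Num.max (upper_env ell xs ys) (inf [set d q.1 q.2 | q in @square R]) <= dstar
  /\ dstar <= B.
Proof.
move=> env_le_d d_le_B dstar.
have d_le_dstar : d xs ys <= dstar.
  apply: ub_le_sup; last by exists (xs, ys); first exact: argmax_in_C.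
  by exists B => _ [p Cp <-]; exact: d_le_B.
split; last first.
  apply: ge_sup => [|_ [p Cp <-]]; last exact: d_le_B.
  by exists (d xs ys), (xs, ys); first exact: argmax_in_C.
have sq_star : square (xs, ys) by apply: C_square; exact: argmax_in_C.
rewrite ge_max; apply/andP; split; apply: le_trans d_le_dstar.
- exact: env_le_d (xs, ys) sq_star.
- exact: inf_square_le (xs, ys) env_le_d sq_star.
Qed.

End ArgmaxOverC.

Theorem lemma4p1 (R : realType) (d : R -> R -> R) (t : nat)
  (ell : 'I_t -> R * R * R) (eps : R) (C : set (R * R))
  (ps : 'I_t -> R * R) (istar : 'I_t) :
  0 < eps ->
  convex_on_square d ->
  finite_set C -> C `<=` @square R ->
  (* ps i = (x_i, y_i) is an argmax of l_i over C *)
  (forall i, C (ps i) /\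
     forall p, C p -> lin (ell i) p.1 p.2 <= lin (ell i) (ps i).1 (ps i).2) ->
  (* (xs, ys) = ps istar, where istar maximizes l_i(ps i) *)
  (forall i, lin (ell i) (ps i).1 (ps i).2
             <= lin (ell istar) (ps istar).1 (ps istar).2) ->
  let xs := (ps istar).1 in let ys := (ps istar).2 in
  let dstar := sup [set d p.1 p.2 | p in C] in
  let dinf := inf [set d q.1 q.2 | q in @square R] in
  let m := Num.max (upper_env ell xs ys) dinf in
  (approx_family ell d eps -> m <= dstar /\ dstar <= m + eps) /\
  (rel_approx_family ell d eps -> m <= dstar /\ dstar <= (1 + eps) * m).
Proof.
move=> eps_gt0 _ _ C_sq ps_argmax istar_max xs ys dstar dinf m.
have env_le_m p : C p -> upper_env ell p.1 p.2 <= m.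
  by move=> Cp; rewrite le_max (upper_env_le_argmax ps_argmax istar_max Cp).
have bounds := sup_image_C_bounds istar C_sq ps_argmax.
split=> [approx | rel_approx].
- apply: bounds => [q /approx /andP[] // | p Cp].
  have /andP[_ d_le] := approx p (C_sq p Cp).
  by apply: le_trans d_le _; rewrite lerD2r env_le_m.
- apply: bounds => [q /rel_approx /andP[] // | p Cp].
  have /andP[_ d_le] := rel_approx p (C_sq p Cp).
  by apply: le_trans d_le _; rewrite ler_pM2l ?env_le_m //; lra.
Qed.
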